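(* Let $S$ be a $\Gamma$-AG$^{**}$-groupoid. If $S\Gamma a=S$ holds for all $a\in S$, or if $a\Gamma S=S$ holds for all $a\in S$, then $S$ is intra-regular.
   Context: Let $S$ and $\Gamma$ be nonempty sets with a map $S\times\Gamma\times S\to S$, $(x,\gamma,y)\mapsto x\gamma y$. $S$ is a $\Gamma$-AG-groupoid if $(x\gamma y)\delta z=(z\gamma y)\delta x$ for all $x,y,z\in S$, $\gamma,\delta\in\Gamma$; it is a $\Gamma$-AG$^{**}$-groupoid if moreover $a\alpha(b\beta c)=b\alpha(a\beta c)$ for all $a,b,c\in S$, $\alpha,\beta\in\Gamma$. For subsets $A,B\subseteq S$, $A\Gamma B=\{a\gamma b: a\in A,\gamma\in\Gamma,b\in B\}$, and $S\Gamma a=S\Gamma\{a\}$, $a\Gamma S=\{a\}\Gamma S$. $S$ is intra-regular if for every $a\in S$ there exist $x,y\in S$ and $\beta,\gamma,\delta\in\Gamma$ with $a=(x\beta(a\delta a))\gamma y$. *)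

Definition GammaAG {S G : Type} (op : S -> G -> S -> S) : Prop :=
  forall (x y z : S) (g d : G), op (op x g y) d z = op (op z g y) d x.

Definition GammaAGss {S G : Type} (op : S -> G -> S -> S) : Prop :=
  GammaAG op /\
  forall (a b c : S) (al be : G), op a al (op b be c) = op b al (op a be c).

(* S Gamma a = S  (the inclusion S Gamma a ⊆ S is automatic) *)
Definition left_full {S G : Type} (op : S -> G -> S -> S) (a : S) : Prop :=
  forall s : S, exists (x : S) (g : G), s = op x g a.

Definition right_full {S G : Type} (op : S -> G -> S -> S) (a : S) : Prop :=
  forall s : S, exists (g : G) (y : S), s = op a g y.

Definition intra_regular {S G : Type} (op : S -> G -> S -> S) : Prop :=
  forall a : S, exists (x y : S) (be ga de : G),
    a = op (op x be (op a de a)) ga y.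


(* If every element generates S on the left, write a = x g a and then x = y b (a g0 a);
   this is already intra-regularity. If every element generates S on the right, write
   a = (a g0 a) g t and t = (a g0 (a g0 a)) m t'; the AG** identity
   u g (v m w) = v g (u m w) moves a g0 (a g0 a) to the front. *)

Section IntraRegular.

Context {S G : Type}.
Variables (op : S -> G -> S -> S) (g0 : G).

Lemma intra_regular_of_left_full :
  (forall a : S, left_full op a) -> intra_regular op.
Proof.
  intros HL a.
  destruct (HL a a) as [x [g Hx]].
  destruct (HL (op a g0 a) x) as [y [b Hy]].
  exists y, a, b, g, g0.
  rewrite <- Hy. exact Hx.
Qed.

Lemma intra_regular_of_right_full :
  (forall (a b c : S) (al be : G), op a al (op b be c) = op b al (op a be c)) ->
  (forall a : S, right_full op a) -> intra_regular op.
Proof.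
  intros Hcomm HR a.
  destruct (HR (op a g0 a) a) as [g [t Ht]].
  destruct (HR (op a g0 (op a g0 a)) t) as [m [t' Ht']].
  exists a, (op (op a g0 a) m t'), g0, g, g0.
  rewrite <- Hcomm, <- Ht'. exact Ht.
Qed.

End IntraRegular.

Theorem mainTheorem1 (S G : Type) (s0 : S) (g0 : G) (op : S -> G -> S -> S) :
  GammaAGss op ->
  ((forall a : S, left_full op a) \/ (forall a : S, right_full op a)) ->
  intra_regular op.
Proof.
  intros [_ Hcomm] [HL | HR].
  - exact (intra_regular_of_left_full op g0 HL).
  - exact (intra_regular_of_right_full op g0 Hcomm HR).
Qed.
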